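(* Let $n \geq 2$ be an integer and let $F$ be any field of characteristic zero. For $a = (a_1,\dots,a_{n-1}) \in F^{n-1}$ define the polynomials $Q_a(x) = n(x - a_1/n)(x-a_2)\cdots(x-a_{n-1}) \in F[x]$ and $P_{a,0}(x) = \int_0^x Q_a(t)\,dt \in F[x]$ (the unique antiderivative of $Q_a$ with zero constant term). Then there exist $a_1,\dots,a_{n-1} \in F$ such that the values $P_{a,0}(a_1/n), P_{a,0}(a_2), \dots, P_{a,0}(a_{n-1})$ are pairwise distinct. *)

From mathcomp Require Import all_boot all_order all_algebra.
Set Implicit Arguments. Unset Strict Implicit. Unset Printing Implicit Defensive.
Import GRing.Theory Num.Theory.
Local Open Scope ring_scope.

Definition antideriv (F : fieldType) (p : {poly F}) : {poly F} :=
  \poly_(i < (size p).+1) (if i is j.+1 then p`_j / (j.+1)%:R else 0).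

(* The points a_1/n, a_2, ..., a_{n-1}; the vector a is indexed by 'I_(n-1),
   with index 0 corresponding to a_1. *)
Definition crit_pts (F : fieldType) (n : nat) (a : 'I_n.-1 -> F) (i : 'I_n.-1) : F :=
  if val i == 0%N then a i / n%:R else a i.

Definition Qa (F : fieldType) (n : nat) (a : 'I_n.-1 -> F) : {poly F} :=
  n%:R *: \prod_(i < n.-1) ('X - (crit_pts a i)%:P).

Definition Pa0 (F : fieldType) (n : nat) (a : 'I_n.-1 -> F) : {poly F} :=
  antideriv (Qa a).

From HB Require Import structures.
From mathcomp Require Import all_boot all_order all_algebra.
From mathcomp Require Import ring.
Import GRing.Theory Num.Theory.
Local Open Scope ring_scope.

(* Taking a_1 = n b_1 and a_k = b_k otherwise makes the points b_1, ..., b_(n-1)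
   and P_(a,0) equal to n times the antiderivative P_b of prod_k (x - b_k), so
   it is enough to find b_1, ..., b_m with the values P_b(b_k) pairwise distinct.  Integration by parts shows that appending a
   point t gives P_(b,t)(x) = (x - t) P_b(x) - A_b(x), where A_b is the
   antiderivative of P_b.  As polynomials in t, the new values are therefore
   the lines (x P_b(x) - A_b(x)) - t P_b(x) at the old points x, and -A_b(t)
   at the new one.  These polynomials are pairwise distinct (the slopes P_b(x)
   are, and -A_b has degree m + 3), and over an infinite field some point t
   separates finitely many distinct polynomials. *)

Section Antiderivative.

Context {F : fieldType}.
Implicit Types p q : {poly F}.

Lemma coef_antideriv p i :
  (antideriv p)`_i = if i is j.+1 then p`_j / (j.+1)%:R else 0.
Proof.
rewrite /antideriv coef_poly; case: ltnP => // hi; case: i hi => // j hj.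
by rewrite nth_default ?mul0r // -ltnS.
Qed.

Fact antideriv_is_semilinear : semilinear (@antideriv F).
Proof.
split=> [c p|p q]; apply/polyP => [[|i]];
  by rewrite !(coef_antideriv, coefZ, coefD) ?mulr0 ?addr0 ?mulrA ?mulrDl.
Qed.
HB.instance Definition _ := GRing.isSemilinear.Build F {poly F} {poly F} _
  (@antideriv F) antideriv_is_semilinear.

Hypothesis hchar : [pchar F] =i pred0.

Let natf_eq0 k : (k%:R == 0 :> F) = (k == 0)%N.
Proof. by move/pcharf0P: hchar. Qed.

Let natf_inj : injective (fun k : nat => k%:R : F).
Proof.
move=> k l; wlog le_kl : k l / (k <= l)%N => [hw|/= eq_kl].
  by case/orP: (leq_total k l) => /hw // h /esym /h.
apply/eqP; rewrite eqn_leq le_kl /= -subn_eq0 -natf_eq0.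
by rewrite natrB // eq_kl subrr.
Qed.

Lemma size_antideriv p : p != 0 -> size (antideriv p) = (size p).+1.
Proof.
move=> p0; apply: size_poly_eq; rewrite /= -[size p]prednK ?size_poly_gt0 //.
by rewrite mulf_neq0 ?invr_eq0 ?natf_eq0 // -lead_coefE lead_coef_eq0.
Qed.

Lemma antiderivMX p :
  antideriv (p * 'X) = antideriv p * 'X - antideriv (antideriv p).
Proof.
apply/polyP => [[|[|i]]]; rewrite coefB coefMX !coef_antideriv ?coefMX ?subr0 //=.
  by rewrite mul0r subrr.
have := natf_eq0 i.+2; rewrite -[(i.+2)%:R]natr1 => /negbT i2.
have /negbT i1 := natf_eq0 i.+1; set k := (i.+1)%:R in i1 i2 *.
by clearbody k; field; rewrite i1 i2.
Qed.

Lemma exists_nonroot p : p != 0 -> exists t, ~~ root p t.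
Proof.
move=> p0; pose ks := [seq k%:R : F | k <- iota 0 (size p)].
have [/hasP [t _ nrt] | /hasPn ks_roots] := boolP (has (fun t => ~~ root p t) ks).
  by exists t.
have ks_uniq : uniq ks by rewrite map_inj_uniq ?iota_uniq.
have ks_all : all (root p) ks by apply/allP => t /ks_roots /negPn.
by have := max_poly_roots p0 ks_all ks_uniq; rewrite size_map size_iota ltnn.
Qed.

Lemma exists_separating_point (Q : seq {poly F}) :
  uniq Q -> exists t, uniq [seq q.[t] | q <- Q].
Proof.
move=> Q_uniq; pose D := \prod_(q1 <- Q) \prod_(q2 <- Q | q1 != q2) (q1 - q2).
have D0 : D != 0.
  by rewrite prodf_seq_neq0; apply/allP => q1 _; rewrite prodf_seq_neq0;
    apply/allP => q2 _; apply/implyP; rewrite subr_eq0.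
have [t] := exists_nonroot _ D0; rewrite /root horner_prod prodf_seq_neq0.
move=> /allP nrt; exists t; rewrite map_inj_in_uniq // => q1 q2 q1Q q2Q eqt.
apply/eqP; apply: contraNT (nrt _ q1Q) => neq12.
rewrite horner_prod prodf_seq_eq0; apply/hasP; exists q2 => //.
by rewrite neq12 hornerD hornerN eqt subrr /=.
Qed.

Definition antideriv_roots (s : seq F) := antideriv (\prod_(c <- s) ('X - c%:P)).

Lemma horner_antideriv_roots_rcons s t x :
  (antideriv_roots (rcons s t)).[x] =
  (x - t) * (antideriv_roots s).[x] - (antideriv (antideriv_roots s)).[x].
Proof.
rewrite /antideriv_roots big_rcons /= mulrBr [_ * t%:P]mulrC mul_polyC.
by rewrite linearB linearZ /= antiderivMX !hornerE; ring.
Qed.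

Lemma exists_antideriv_roots_uniq m :
  exists s : seq F, size s = m /\ uniq [seq (antideriv_roots s).[x] | x <- s].
Proof.
elim: m => [|m [s [size_s vals_uniq]]]; first by exists [::].
set P := antideriv_roots s in vals_uniq *; set A := antideriv P.
pose line x := (x * P.[x] - A.[x])%:P - P.[x] *: 'X.
have lines_uniq : uniq [seq line x | x <- s].
  apply: (map_uniq (f := fun q : {poly F} => - q`_1)); rewrite -map_comp.
  suff -> : [seq - (line x)`_1 | x <- s] = [seq P.[x] | x <- s] by [].
  by apply: eq_map => x; rewrite coefB coefC coefZ coefX mulr1 sub0r opprK.
have size_P : size P = (size s).+2.
  by rewrite size_antideriv ?size_prod_XsubC // monic_neq0 ?monic_prod_XsubC.
have size_A : size A = (size s).+3.
  by rewrite size_antideriv ?size_P // -size_poly_gt0 size_P.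
have A_notin : - A \notin [seq line x | x <- s].
  apply/mapP => [[x _ eqA]]; have : (size (line x) <= 2)%N.
    rewrite (leq_trans (size_polyD _ _)) // geq_max size_polyN size_polyC.
    by rewrite (leq_trans (leq_b1 _)) // (leq_trans (size_scale_leq _ _)) ?size_polyX.
  by rewrite -eqA size_polyN size_A.
have Q_uniq : uniq (rcons [seq line x | x <- s] (- A)).
  by rewrite rcons_uniq A_notin lines_uniq.
have [t vals_t_uniq] := exists_separating_point _ Q_uniq.
exists (rcons s t); split; first by rewrite size_rcons size_s.
suff -> : [seq (antideriv_roots (rcons s t)).[x] | x <- rcons s t] =
  [seq q.[t] | q <- rcons [seq line x | x <- s] (- A)] by [].
rewrite !map_rcons -map_comp horner_antideriv_roots_rcons subrr mul0r sub0r hornerN.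
by congr rcons; apply: eq_map => x /=; rewrite horner_antideriv_roots_rcons !hornerE; ring.
Qed.

End Antiderivative.

Theorem lemma2p4 (F : fieldType) (n : nat) (hn : (2 <= n)%N)
  (hchar : [pchar F] =i pred0) :
  exists a : 'I_n.-1 -> F,
    forall i j : 'I_n.-1, i != j ->
      (Pa0 a).[crit_pts a i] != (Pa0 a).[crit_pts a j].
Proof.
have [s [size_s vals_uniq]] := exists_antideriv_roots_uniq hchar n.-1.
have n_neq0 : n%:R != 0 :> F by move/pcharf0P: hchar => ->; rewrite -lt0n ltnW.
pose a (i : 'I_n.-1) := if val i == 0%N then n%:R * s`_i else s`_i.
have crit_a i : crit_pts a i = s`_i.
  by rewrite /crit_pts /a; case: eqP => // _; rewrite mulrC mulKf.
have Pa0_a : Pa0 a = n%:R *: antideriv_roots s.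
  rewrite /Pa0 /Qa linearZ /antideriv_roots (big_nth 0) size_s big_mkord.
  by congr (_ *: antideriv _); apply: eq_bigr => i _; rewrite crit_a.
exists a => i j neq_ij; rewrite Pa0_a !crit_a !hornerZ (inj_eq (mulfI n_neq0)).
have [i_s j_s] : (i < size s)%N /\ (j < size s)%N by rewrite size_s.
by rewrite -(nth_map 0 0 _ i_s) -(nth_map 0 0 _ j_s) nth_uniq ?size_map.
Qed.
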